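(* For every mediator $m$, the Price by Removal Mechanism is individually rational for $m$, and truthfulness is a (weakly) dominant strategy for $m$.
   Context: Model: finite sets of users $P$ (costs $c(p)\ge0$), mediators $M$ (the sets $P(m)$ partition $P$), advertisers $A$ (public capacity $u(a)$, a positive integer, and private value $v(a)\ge0$); each advertiser $a$ has $u(a)$ slots of value $v(a)$; $B$ is the set of all slots. A mediator's utility is the total payment he receives minus the total cost of his users that are assigned. Each advertiser reports a value; each mediator reports any subset of his users with arbitrary costs (and an order on them); truthful means reporting the true users and costs. IR for $m$: $m$'s utility is non-negative when truthful. $\gamma\ge1$ satisfies $u(a)\le\gamma$ and $|P(m)|\le\gamma$. Costs/values are compared with a fixed tie-breaking rule (using a report-independent order on players) making them all distinct. Canonical assignment $S_c(P',B')$: order slots of $B'$ by decreasing value $b_1,\dots$ and users of $P'$ by increasing cost $p_1,\dots$; include $(p_i,b_i)$ iff $v(b_i)>c(p_i)$; the user at location $i$ is $p_i$. Price by Removal Mechanism (on reports): (1) for each mediator $m$, if $|S_c(P\setminus P(m),B)|>4\gamma$, $p_m$ is the user at location $|S_c(P\setminus P(m),B)|-4\gamma$ of $S_c(P\setminus P(m),B)$ and $c_m=c(p_m)$, else $c_m=-\infty$; (2) $\hat P(m)$ = users of $m$ with cost less than $c_m$; (3) VCG auction with items $\bigcup_m\hat P(m)$ and bidders the advertisers (value $v(a)$ for each of up to $u(a)$ items) plus a dummy advertiser of value $\max_m c_m$ and capacity $\sum_m|\hat P(m)|$; (4) charge advertisers their VCG payments; (5) for each assigned user $p$, pay $c_m$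 to the mediator $m$ of $p$. *)

From HB Require Import structures.
From mathcomp Require Import all_boot all_order all_algebra.
Import Order.TTheory GRing.Theory Num.Theory.
Set Implicit Arguments. Unset Strict Implicit. Unset Printing Implicit Defensive.
Local Open Scope ring_scope.

Section PriceByRemoval.

Variables (R : realFieldType) (U Med Adv : finType).
(* U = users, Med = mediators, Adv = advertisers.
   owner p = the mediator m with p \in P(m)  (so the P(m) partition U). *)
Variable owner : U -> Med.
Variable cap : Adv -> nat.
(* report-independent order on the players (mediators and advertisers),
   used for tie-breaking *)
Variable rank : Med + Adv -> nat.
Variable gamma : nat.

(* A compared quantity is a key (x, r, o): numerical value x, rank r of the
   player it belongs to, and o the position of the user in his mediator's
   reported order (0 for advertiser slots). *)
Definition key := (R * nat * nat)%type.

Definition key_lt (x y : key) : bool :=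
  (x.1.1 < y.1.1) ||
  ((x.1.1 == y.1.1) && ((x.1.2 < y.1.2)%N || ((x.1.2 == y.1.2) && (x.2 < y.2)%N))).

Definition key_le (x y : key) : bool := (x == y) || key_lt x y.

(* A (global) report of the users' side: the reported set of users (mediator
   m's reported users are those of rep_users owned by m), reported costs, and
   the reported order (a rank within each mediator's users). *)
Record report := Report {
  rep_users : {set U};
  rep_cost  : U -> R;
  rep_ord   : U -> nat }.

Definition combine (m : Med) (mine theirs : report) : report :=
  Report [set p | if owner p == m then p \in rep_users mine
                  else p \in rep_users theirs]
         (fun p => if owner p == m then rep_cost mine p else rep_cost theirs p)
         (fun p => if owner p == m then rep_ord mine p else rep_ord theirs p).

Definition valid_orders (r : report) : Prop :=
  forall m' : Med, {in [pred p | owner p == m'] &, injective (rep_ord r)}.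

Definition truthful (c : U -> R) (m : Med) (r : report) : Prop :=
  (forall p, owner p = m -> p \in rep_users r) /\
  (forall p, owner p = m -> rep_cost r p = c p).

Definition ukey (r : report) (p : U) : key :=
  (rep_cost r p, rank (inl (owner p)), rep_ord r p).

Definition slots (vr : Adv -> R) : seq key :=
  flatten [seq nseq (cap a) (vr a, rank (inr a), 0%N) | a <- enum Adv].

Definition slots_sorted (vr : Adv -> R) : seq key :=
  sort (fun x y => key_le y x) (slots vr).

Definition users_sorted (r : report) (P' : {set U}) : seq U :=
  sort (fun p q => key_le (ukey r p) (ukey r q)) (enum P').

Definition Sc_size (r : report) (vr : Adv -> R) (P' : {set U}) : nat :=
  count (fun pb : U * key => key_lt (ukey r pb.1) pb.2)
        (zip (users_sorted r P') (slots_sorted vr)).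

(* the user at location i (1-based) of S_c(P', B) *)
Definition Sc_user (r : report) (P' : {set U}) (i : nat) : option U :=
  onth (users_sorted r P') i.-1.

Definition others (r : report) (m : Med) : {set U} :=
  [set p in rep_users r | owner p != m].

(* step (1): threshold c_m ; None stands for -infinity *)
Definition cthr (r : report) (vr : Adv -> R) (m : Med) : option key :=
  let k := Sc_size r vr (others r m) in
  if (4 * gamma < k)%N then omap (ukey r) (Sc_user r (others r m) (k - 4 * gamma))
  else None.

Definition opt_lt (x : key) (o : option key) : bool :=
  if o is Some y then key_lt x y else false.

Definition items (r : report) (vr : Adv -> R) : {set U} :=
  [set p in rep_users r | opt_lt (ukey r p) (cthr r vr (owner p))].

Definition omax_key (o1 o2 : option key) : option key :=
  match o1, o2 with
  | None, o | o, None => o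
  | Some x, Some y => if key_lt x y then Some y else Some x
  end.

Definition dummy (r : report) (vr : Adv -> R) : option key :=
  foldr omax_key None [seq cthr r vr m | m <- enum Med].

Definition beats_dummy (d : option key) (b : key) : bool :=
  if d is Some y then key_lt y b else true.

(* In the VCG auction all items are identical and every bidder values each of
   at most cap items equally; with distinct (tie-broken) values the efficient
   allocation gives items to the highest slots, the dummy (whose capacity is
   the number of items) taking the rest. *)
Definition nwin (r : report) (vr : Adv -> R) : nat :=
  minn #|items r vr| (count (beats_dummy (dummy r vr)) (slots vr)).

(* Asg is a possible set of assigned users (i.e. users given to real
   advertisers) in the VCG outcome: items are interchangeable, so any
   set of items of the right size *)
Definition vcg_assigned (r : report) (vr : Adv -> R) (Asg : {set U}) : bool :=
  (Asg \subset items r vr) && (#|Asg| == nwin r vr).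

Definition price (r : report) (vr : Adv -> R) (m : Med) : R :=
  if cthr r vr m is Some k then k.1.1 else 0.

Definition med_utility (c : U -> R) (r : report) (vr : Adv -> R)
    (Asg : {set U}) (m : Med) : R :=
  \sum_(p in Asg | owner p == m) (price r vr m - c p).

End PriceByRemoval.

From Pilot Require Import Defs.
From mathcomp Require Import all_boot all_order all_algebra zify.
Import Order.TTheory GRing.Theory Num.Theory.
Set Implicit Arguments. Unset Strict Implicit. Unset Printing Implicit Defensive.

(* The price c_m paid to mediator m depends only on the reports of the other
   mediators, so whatever m reports, his utility is at most
   sum_(p in P(m)) (c_m - c(p))^+.  Truthful reporting attains this bound.
   Indeed, if m' is the mediator with the largest threshold y = c_m', every
   offered user outside P(m') costs less than y, hence lies among the first
   |S_c(P \ P(m'), B)| - 4 gamma - 1 users of that canonical assignment, while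
   all of its first |S_c| slots beat the dummy value y; as m' owns at most gamma
   users, there are fewer offered users than such slots and VCG assigns all of
   them, in particular exactly the users p of m with c(p) < c_m. *)

Lemma count_leq_nth_tail (T : Type) (a : pred T) x0 s j :
  (forall l, j <= l < size s -> ~~ a (nth x0 s l)) -> count a s <= j.
Proof.
move=> tail_notin; rewrite -(cat_take_drop j s) count_cat.
have -> : count a (drop j s) = 0.
  apply/eqP; rewrite -leqn0 leqNgt -has_count; apply/negP.
  move=> /(has_nthP x0)[l]; rewrite size_drop nth_drop => lt_l.
  by apply/negP/tail_notin; lia.
by rewrite addn0 (leq_trans (count_size _ _)) // size_take_min geq_minl.
Qed.

Lemma card_set_count (T : finType) (A : {set T}) (P : pred T) :
  #|[set x in A | P x]| = count P (enum A).
Proof.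
rewrite cardsE cardE /enum_mem -size_filter -filter_predI.
by congr size; apply: eq_filter => x; rewrite /= andbC.
Qed.

Lemma zip_mapl (S T V : Type) (f : S -> V) (s : seq S) (t : seq T) :
  zip (map f s) t = [seq (f xy.1, xy.2) | xy <- zip s t].
Proof. by elim: s t => [|x s IHs] [|y t] //=; rewrite IHs. Qed.

Section Threshold.
Context {disp : Order.disp_t} {T : orderType disp}.
Implicit Types (s t : seq T) (y : T).
Local Open Scope order_scope.

(* For [s] increasing and [t] decreasing the counted pairs form a prefix of
   [zip s t], so this is the size of the canonical assignment S_c. *)
Definition sc_size s t : nat := count (fun xy => xy.1 < xy.2) (zip s t).

Definition threshold (g : nat) s t : option T :=
  let k := sc_size s t in if (g < k)%N then onth s (k - g).-1 else None.

Lemma count_lt_nth_leq x0 s i :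
  sorted <=%O s -> (count (< nth x0 s i) s <= i)%N.
Proof.
move=> s_sorted; rewrite leqNgt; apply/negP.
by move=> /(nth_count_lt x0 s_sorted); rewrite ltxx.
Qed.

Lemma nth_lt_sc_size x0 s t j : sorted <=%O s -> sorted >=%O t ->
  (j < sc_size s t)%N -> nth x0 s j < nth x0 t j.
Proof.
move=> s_sorted t_sorted; apply: contraTT; rewrite -leNgt -leqNgt => le_tj_sj.
rewrite /sc_size; apply: (count_leq_nth_tail (x0 := (x0, x0))).
move=> l /andP[le_jl lt_l].
move: (lt_l); rewrite size_zip leq_min => /andP[lt_ls lt_lt].
rewrite nth_zip_cond lt_l /= -leNgt.
have le_tl_tj : nth x0 t l <= nth x0 t j.
  by apply: (sorted_leq_nth ge_trans lexx); rewrite ?inE ?(leq_ltn_trans le_jl).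
have le_sj_sl : nth x0 s j <= nth x0 s l.
  by apply: (le_sorted_leq_nth x0 s_sorted); rewrite ?inE ?(leq_ltn_trans le_jl).
exact: le_trans le_tl_tj (le_trans le_tj_sj le_sj_sl).
Qed.

Lemma count_gt_nth_sc_size x0 s t i : sorted <=%O s -> sorted >=%O t ->
  (i < sc_size s t)%N -> (sc_size s t <= count (> nth x0 s i) t)%N.
Proof.
move=> s_sorted t_sorted; set k := sc_size s t => lt_ik.
have : (k <= size (zip s t))%N by exact: count_size.
rewrite size_zip leq_min => /andP[le_ks le_kt].
rewrite -[t](cat_take_drop k) count_cat (leq_trans _ (leq_addr _ _)) //.
suff : all (> nth x0 s i) (take k t) by rewrite all_count size_takel // => /eqP->.
apply/(all_nthP x0) => j; rewrite size_takel // => lt_jk; rewrite nth_take //=.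
have lt_k1 : (k.-1 < k)%N by lia.
have [lt_is lt_k1s] : (i < size s)%N /\ (k.-1 < size s)%N by lia.
have [lt_jt lt_k1t] : (j < size t)%N /\ (k.-1 < size t)%N by lia.
have le_si : nth x0 s i <= nth x0 s k.-1.
  by apply: (le_sorted_leq_nth x0 s_sorted) => //; lia.
have le_tj : nth x0 t k.-1 <= nth x0 t j.
  by apply: (sorted_leq_nth ge_trans lexx) => //; lia.
have := nth_lt_sc_size x0 s_sorted t_sorted lt_k1.
by move=> /(le_lt_trans le_si)/lt_le_trans; apply.
Qed.

Lemma threshold_count g s t y : sorted <=%O s -> sorted >=%O t ->
  threshold g s t = Some y -> (count (< y) s + g < count (> y) t)%N.
Proof.
move=> s_sorted t_sorted; rewrite /threshold; set k := sc_size s t.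
case: ifP => // lt_gk /(onth_nth y) y_def.
have lt_ik : ((k - g).-1 < k)%N by lia.
have := count_gt_nth_sc_size y s_sorted t_sorted lt_ik.
have := count_lt_nth_leq y (k - g).-1 s_sorted.
rewrite y_def -/k; lia.
Qed.

End Threshold.

Section KeyOrder.
Variable R : realFieldType.
Implicit Types (x y z : key R) (l : seq (option (key R))).
Local Open Scope ring_scope.

Definition lexkey : Type := ((R *l nat) *l nat)%type.

Lemma key_ltE x y : key_lt x y = ((x : lexkey) < y)%O.
Proof.
case: x => [[a b] c]; case: y => [[a' b'] c'].
rewrite /key_lt !ltxi_pair !lexi_pair /= !leEnat ltEnat.
by case: (ltgtP a a') => //= _; case: (ltngtP b b').
Qed.

Lemma key_leE x y : key_le x y = ((x : lexkey) <= y)%O.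
Proof. by rewrite /key_le key_ltE le_eqVlt. Qed.

Lemma key_leNlt x y : key_le x y = ~~ key_lt y x.
Proof. by rewrite key_leE key_ltE leNgt. Qed.

Lemma key_le_total x y : key_le x y || key_le y x.
Proof. by rewrite !key_leE le_total. Qed.

Lemma key_le_value x y : key_le x y -> x.1.1 <= y.1.1.
Proof. by rewrite key_leE !leEprodlexi => /andP[/andP[]]. Qed.

Lemma key_lt_value x y : key_lt x y -> x.1.1 <= y.1.1.
Proof. by rewrite key_ltE => /ltW; rewrite -key_leE; apply: key_le_value. Qed.

Lemma foldr_omax_key_ub l z :
  Some z \in l -> exists2 y, foldr (@omax_key R) None l = Some y & key_le z y.
Proof.
elim: l => [|o l IHl] //=; rewrite inE => /orP[/eqP<- | /IHl[y -> le_zy]] /=.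
  case: (foldr _ None l) => [y|] /=; last by exists z; rewrite // key_leE.
  by case: ifP => lt_zy; [exists y; rewrite // key_leE ltW // -key_ltE
                         | exists z; rewrite // key_leE].
case: o => [x|] /=; last by exists y.
case: ifP => lt_xy; first by exists y.
exists x => //; move: le_zy lt_xy; rewrite !key_leE key_ltE => le_zy /negbT.
by rewrite -leNgt; apply: le_trans.
Qed.

Lemma foldr_omax_key_mem l y :
  foldr (@omax_key R) None l = Some y -> Some y \in l.
Proof.
elim: l => [|o l IHl] //=; rewrite inE.
case: o => [x|]; case: (foldr _ None l) IHl => [y'|] IHl //=.
- by case: ifP => _ [?]; subst; rewrite ?eqxx // IHl ?orbT.
- by case=> <-; rewrite eqxx.
Qed.
End KeyOrder.

Section Mechanism.
Variables (R : realFieldType) (U Med Adv : finType).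
Variables (owner : U -> Med) (cap : Adv -> nat) (rank : Med + Adv -> nat).
Variable gamma : nat.
Implicit Types (r t d theirs : report R U) (vr : Adv -> R) (m : Med) (P : {set U}).

Local Notation ukey := (ukey owner rank).
Local Notation cthr := (cthr owner cap rank gamma).
Local Notation items := (items owner cap rank gamma).
Local Notation dummy := (dummy owner cap rank gamma).
Local Notation price := (price owner cap rank gamma).
Local Notation others := (others owner).
Local Notation combine := (combine owner).
Local Notation slots_sorted := (slots_sorted cap rank).

Definition cost_keys r P : seq (lexkey R) :=
  sort (@key_le R) (map (ukey r) (enum P)).

Lemma cost_keysE r P : cost_keys r P = map (ukey r) (users_sorted owner rank r P).
Proof. exact: sort_map. Qed.

Lemma sorted_cost_keys r P : sorted <=%O (cost_keys r P).
Proof. by rewrite -(eq_sorted (@key_leE R)); apply/sort_sorted/key_le_total. Qed.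

Lemma sorted_slots vr : sorted >=%O (slots_sorted vr : seq (lexkey R)).
Proof.
rewrite -(eq_sorted (fun x y => @key_leE R y x)).
by apply: sort_sorted => x y; rewrite orbC key_le_total.
Qed.

Lemma Sc_sizeE r vr P :
  Sc_size owner cap rank r vr P = sc_size (cost_keys r P) (slots_sorted vr).
Proof.
rewrite /Sc_size /sc_size cost_keysE zip_mapl count_map.
by apply: eq_count => -[p b]; rewrite /= key_ltE.
Qed.

Lemma cthrE r vr m :
  cthr r vr m = threshold (4 * gamma) (cost_keys r (others r m)) (slots_sorted vr).
Proof. by rewrite /Defs.cthr /threshold -Sc_sizeE cost_keysE onth_map. Qed.

Lemma cost_keys_others_combine m t d theirs :
  cost_keys (combine m t theirs) (others (combine m t theirs) m)
  = cost_keys (combine m d theirs) (others (combine m d theirs) m).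
Proof.
have -> : others (combine m t theirs) m = others (combine m d theirs) m.
  by apply/setP => p; rewrite !inE; case: (owner p == m); rewrite ?andbF.
rewrite /cost_keys; congr sort; apply/eq_in_map => p.
by rewrite mem_enum inE => /andP[_ /negbTE not_m]; rewrite /Defs.ukey /= not_m.
Qed.

Lemma price_combine m t d theirs vr :
  price (combine m t theirs) vr m = price (combine m d theirs) vr m.
Proof. by rewrite /Defs.price !cthrE (cost_keys_others_combine m t d). Qed.

Lemma dummy_ub r vr m z :
  cthr r vr m = Some z -> exists2 y, dummy r vr = Some y & key_le z y.
Proof.
move=> thr_m; apply: foldr_omax_key_ub; rewrite -thr_m.
by apply: map_f; rewrite mem_enum.
Qed.

Lemma dummy_attained r vr y :
  dummy r vr = Some y -> exists m, cthr r vr m = Some y.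
Proof. by move=> /foldr_omax_key_mem/mapP[m _ ->]; exists m. Qed.

Hypothesis mediator_size : forall m, (#|[set p | owner p == m]| <= gamma)%N.

Lemma card_items_le r vr :
  (#|items r vr| <= count (beats_dummy (dummy r vr)) (slots cap rank vr))%N.
Proof.
case D: (dummy r vr) => [y|]; last first.
  suff -> : items r vr = set0 by rewrite cards0.
  apply/setP => p; rewrite !inE /opt_lt.
  case E: (cthr r vr (owner p)) => [z|]; last by rewrite andbF.
  by have [y] := dummy_ub E; rewrite D.
have [m' thr_m'] := dummy_attained D.
pose below := [set p in others r m' | key_lt (ukey r p) y].
have sub_items : items r vr \subset below :|: [set p | owner p == m'].
  apply/subsetP => p; rewrite !inE /opt_lt => /andP[p_rep].
  case E: (cthr r vr (owner p)) => [z|] // lt_pz.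
  have [_|_] := eqVneq (owner p) m'; rewrite ?orbT // orbF p_rep /=.
  have [y'] := dummy_ub E; rewrite D => -[<-]; move: lt_pz.
  by rewrite !key_ltE key_leE; apply: lt_le_trans.
have := threshold_count (g := 4 * gamma) (y := y : lexkey R)
  (sorted_cost_keys r (others r m')) (sorted_slots vr).
rewrite -cthrE => /(_ thr_m').
have -> : count (< (y : lexkey R))%O (cost_keys r (others r m')) = #|below|.
  rewrite card_set_count /cost_keys count_sort count_map.
  by apply: eq_count => p; rewrite /= key_ltE.
have -> : count (> (y : lexkey R))%O (slots_sorted vr)
          = count (beats_dummy (Some y)) (slots cap rank vr).
  by rewrite count_sort; apply: eq_count => b; rewrite /= key_ltE.
have := leq_trans (subset_leq_card sub_items) (leq_card_setU _ _).
have := mediator_size m'.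
lia.
Qed.

Lemma vcg_assigned_items r vr A :
  vcg_assigned owner cap rank gamma r vr A -> A = items r vr.
Proof.
case/andP=> sub_A /eqP card_A; apply/eqP; rewrite eqEcard sub_A card_A /nwin.
by rewrite (minn_idPl (card_items_le r vr)) leqnn.
Qed.

Local Open Scope ring_scope.

Definition surplus (c : U -> R) r vr m : R :=
  \sum_(p | owner p == m) Num.max 0 (price r vr m - c p).

Lemma med_utility_le_surplus c r vr A m :
  med_utility owner cap rank gamma c r vr A m <= surplus c r vr m.
Proof.
rewrite /med_utility /surplus big_mkcondl; apply: ler_sum => p _.
by case: ifP => _; rewrite le_max lexx ?orbT.
Qed.

Lemma truthful_med_utility c m t theirs vr :
  (forall p, 0 <= c p) -> truthful owner c m t ->
  let r := combine m t theirs in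
  med_utility owner cap rank gamma c r vr (items r vr) m = surplus c r vr m.
Proof.
move=> c_ge0 [t_users t_cost] r; rewrite /med_utility /surplus big_mkcondl.
apply: eq_bigr => p /eqP p_m.
have key_p : ukey r p = (c p, rank (inl m), rep_ord t p).
  by rewrite /Defs.ukey /= p_m eqxx t_cost.
rewrite !inE /= p_m eqxx t_users // /opt_lt /Defs.price key_p /=.
case: (cthr r vr m) => [z|]; last by rewrite sub0r (max_idPl _) // oppr_le0.
case: ifP => [lt_pz|/negbT ge_pz].
  by rewrite (max_idPr _) // subr_ge0 (key_lt_value lt_pz).
rewrite (max_idPl _) // subr_le0.
by move: ge_pz; rewrite -key_leNlt => /key_le_value.
Qed.

End Mechanism.

Local Open Scope ring_scope.

Theorem lemma11 (R : realFieldType) (U Med Adv : finType)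
    (owner : U -> Med) (c : U -> R) (cap : Adv -> nat)
    (rank : Med + Adv -> nat) (gamma : nat) :
  (forall p, 0 <= c p) ->
  (forall a, 0 < cap a)%N ->
  (1 <= gamma)%N ->
  (forall a, cap a <= gamma)%N ->
  (forall m, #|[set p | owner p == m]| <= gamma)%N ->
  injective rank ->
  forall (m : Med) (vr : Adv -> R) (theirs t d : report R U)
         (At Ad : {set U}),
    truthful owner c m t ->
    valid_orders owner (combine owner m t theirs) ->
    valid_orders owner (combine owner m d theirs) ->
    vcg_assigned owner cap rank gamma (combine owner m t theirs) vr At ->
    vcg_assigned owner cap rank gamma (combine owner m d theirs) vr Ad ->
    0 <= med_utility owner cap rank gamma c (combine owner m t theirs) vr At m /\
    med_utility owner cap rank gamma c (combine owner m d theirs) vr Ad m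
      <= med_utility owner cap rank gamma c (combine owner m t theirs) vr At m.
Proof.
move=> c_ge0 _ _ _ mediator_size _ m vr theirs t d At Ad t_truthful _ _ At_vcg _.
rewrite (vcg_assigned_items mediator_size At_vcg) truthful_med_utility //.
split; first by apply: sumr_ge0 => p _; rewrite le_max lexx.
rewrite /surplus (price_combine owner cap rank gamma m t d).
exact: med_utility_le_surplus.
Qed.
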